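(* Let $\Omega\subset\mathbb{R}^2$ be a bounded domain, let $\mu_1,\mu_4,\mu_5\in\mathbb{R}$ and $\lambda,\gamma,\varepsilon>0$. Let ${\boldsymbol U}_h\subset H^1(\Omega)^2$, $P_h\subset L^2(\Omega)$, $\Phi_h\subset H^1(\Omega)$, $\Psi_h\subset H^1(\Omega)$ be finite-dimensional (conforming finite element) spaces, and set ${\boldsymbol U}_{h0}={\boldsymbol U}_h\cap H^1_0(\Omega)^2$, $P_{h0}=P_h\cap L^2_0(\Omega)$. Let $I$ be a time interval and let $t\mapsto({\boldsymbol u}(t),p(t),\phi(t),\psi(t))\in {\boldsymbol U}_{h0}\times P_{h0}\times\Phi_h\times\Psi_h$ be a solution on $I$ (with ${\boldsymbol u},\phi,\psi$ continuously differentiable in $t$) of the space-discrete scheme: for all $t\in I$ and all $(\bar{\boldsymbol u},\bar p,\bar\phi,\bar\psi)\in {\boldsymbol U}_{h0}\times P_{h0}\times\Phi_h\times\Psi_h$, $$\big({\boldsymbol u}_t,\bar{\boldsymbol u}\big)+c\big({\boldsymbol u},{\boldsymbol u},\bar{\boldsymbol u}\big)+\big(\sigma^d(D({\boldsymbol u}),\nabla\phi),D(\bar{\boldsymbol u})\big)-\big(p,\nabla\cdot\bar{\boldsymbol u}\big)+\frac{\lambda}{\gamma}\big((\phi_t+{\boldsymbol u}\cdot\nabla\phi)\nabla\phi,\bar{\boldsymbol u}\big)=0,$$ $$\big(\nabla\cdot{\boldsymbol u},\bar p\big)=0,$$ $$\frac1\gamma\big(\phi_t+{\boldsymbol u}\cdot\nabla\phi,\bar\phi\big)+\big(\nabla\psi,\nabla\bar\phi\big)+\frac{1}{\varepsilon^2}\big({\boldsymbol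 f}(\nabla\phi),\nabla\bar\phi\big)=0,$$ $$\big(\nabla\phi,\nabla\bar\psi\big)-\big(\psi,\bar\psi\big)=0.$$ Then for all $t\in I$, $$\frac{d}{dt}E_{tot}\big({\boldsymbol u}(t),\nabla\phi(t),\psi(t)\big)+\big(\sigma^d(D({\boldsymbol u}(t)),\nabla\phi(t)),D({\boldsymbol u}(t))\big)+\frac{\lambda}{\gamma}\big\|\phi_t(t)+{\boldsymbol u}(t)\cdot\nabla\phi(t)\big\|_{L^2}^2=0.$$
   Context: $(\cdot,\cdot)$ denotes the $L^2(\Omega)$ inner product (for scalars, vectors or matrices). $D({\boldsymbol u})=(\nabla{\boldsymbol u}+\nabla{\boldsymbol u}^t)/2$. For ${\boldsymbol n}\in\mathbb{R}^2$, $F({\boldsymbol n})=\frac14(|{\boldsymbol n}|^2-1)^2$ and ${\boldsymbol f}({\boldsymbol n})=\nabla_{\boldsymbol n}F({\boldsymbol n})=(|{\boldsymbol n}|^2-1){\boldsymbol n}$. The dissipative tensor is $\sigma^d(D({\boldsymbol u}),{\boldsymbol n})=\mu_1({\boldsymbol n}^tD({\boldsymbol u}){\boldsymbol n})\,{\boldsymbol n}\otimes{\boldsymbol n}+\mu_4D({\boldsymbol u})+\mu_5\big(D({\boldsymbol u}){\boldsymbol n}\otimes{\boldsymbol n}+{\boldsymbol n}\otimes D({\boldsymbol u}){\boldsymbol n}\big)$. The trilinear form is $c({\boldsymbol u},{\boldsymbol v},{\boldsymbol w})=(({\boldsymbol u}\cdot\nabla){\boldsymbol v},{\boldsymbol w})+\frac12((\nabla\cdot{\boldsymbol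 u}){\boldsymbol v},{\boldsymbol w})$. The total energy is $E_{tot}({\boldsymbol u},\nabla\phi,\psi)=\frac12\|{\boldsymbol u}\|_{L^2}^2+\lambda\big(\frac12\|\psi\|_{L^2}^2+\frac{1}{\varepsilon^2}\int_\Omega F(\nabla\phi)\big)$. *)

Set Warnings "-notation-overridden,-ambiguous-paths,-notation-incompatible-prefix".
From HB Require Import structures.
From mathcomp Require Import all_boot all_order all_algebra.
From mathcomp Require Import all_classical all_reals all_analysis.
Set Implicit Arguments.
Unset Strict Implicit.
Unset Printing Implicit Defensive.
Import Order.TTheory GRing.Theory Num.Theory.
Import numFieldNormedType.Exports.
Local Open Scope classical_set_scope.
Local Open Scope ring_scope.

Section Defs.
Variable R : realType.

Definition T2 := (measurableTypeR R * measurableTypeR R)%type.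
Definition lam2 := ((@lebesgue_measure R) \x (@lebesgue_measure R))%E.

Definition integ (D : set T2) (f : T2 -> R) : R := Rintegral lam2 D f.

Definition vdot (a b : 'rV[R]_2) : R := \sum_(i < 2) a 0 i * b 0 i.
Definition mdot (A B : 'M[R]_2) : R := \sum_(i < 2) \sum_(j < 2) A i j * B i j.

Definition e2 (i : 'I_2) : R * R := if i == ord0 then (1, 0) else (0, 1).
Definition partial (i : 'I_2) (f : R * R -> R) : R * R -> R :=
  fun x => 'D_(e2 i) f x.
Fixpoint iterD (s : seq 'I_2) (f : R * R -> R) : R * R -> R :=
  match s with [::] => f | i :: s' => partial i (iterD s' f) end.

Definition smooth (f : R * R -> R) : Prop :=
  forall s : seq 'I_2, continuous (iterD s f) /\
    forall (i : 'I_2) (x : R * R), derivable (iterD s f) x (e2 i).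

Definition test_fun (Om : set (R * R)) (f : R * R -> R) : Prop :=
  smooth f /\ exists K : set (R * R), compact K /\ K `<=` Om /\
    forall x, ~ K x -> f x = 0.

Definition weak_partial (Om : set (R * R)) (f : R * R -> R) (i : 'I_2)
    (g : R * R -> R) : Prop :=
  forall phi, test_fun Om phi ->
    integ Om (fun x => f x * partial i phi x) = - integ Om (fun x => g x * phi x).

Definition bdd_on (Om : set (R * R)) (f : R * R -> R) : Prop :=
  exists M : R, forall x, Om x -> `|f x| <= M.

Definition meas_on (Om : set (R * R)) (f : R * R -> R) : Prop :=
  @measurable_fun _ _ T2 R Om f.

Definition L2 (Om : set (R * R)) (f : R * R -> R) : Prop :=
  meas_on Om f /\ (\int[lam2]_(x in Om) ((f x) ^+ 2)%:E < +oo)%E.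

(* a scalar W^{1,oo}(Om) (hence H^1(Om)) function b with weak gradient g *)
Definition fe_scalar (Om : set (R * R)) (b : R * R -> R)
    (g : R * R -> 'rV[R]_2) : Prop :=
  meas_on Om b /\ bdd_on Om b /\
  forall i : 'I_2, meas_on Om (fun x => g x 0 i) /\
    bdd_on Om (fun x => g x 0 i) /\ weak_partial Om b i (fun x => g x 0 i).

(* a vector W^{1,oo}(Om)^2 function u with weak Jacobian J, J c i = d_i u_c *)
Definition fe_vector (Om : set (R * R)) (u : R * R -> 'rV[R]_2)
    (J : R * R -> 'M[R]_2) : Prop :=
  forall c : 'I_2, fe_scalar Om (fun x => u x 0 c) (fun x => row c (J x)).

Definition H10 (Om : set (R * R)) (u : R * R -> 'rV[R]_2)
    (J : R * R -> 'M[R]_2) : Prop :=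
  exists phi : nat -> 'I_2 -> R * R -> R,
    (forall n c, test_fun Om (phi n c)) /\
    forall c : 'I_2,
      ((fun n => integ Om (fun x => (phi n c x - u x 0 c) ^+ 2)) @ \oo --> 0) /\
      forall i : 'I_2,
      ((fun n => integ Om (fun x => (partial i (phi n c) x - J x c i) ^+ 2))
          @ \oo --> 0).

Definition mean_zero (Om : set (R * R)) (p : R * R -> R) : Prop :=
  integ Om p = 0.

Definition lcs n (a : 'I_n -> R) (b : 'I_n -> R * R -> R) : R * R -> R :=
  fun x => \sum_(k < n) a k * b k x.
Definition lcv n m p (a : 'I_n -> R) (b : 'I_n -> R * R -> 'M[R]_(m, p)) :
    R * R -> 'M[R]_(m, p) :=
  fun x => \sum_(k < n) a k *: b k x.

Definition C1_on (I : set R) (a : R -> R) : Prop :=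
  (forall t, I t -> derivable a t 1) /\ {in I, continuous (derive1 a)}.

Definition symgrad (J : 'M[R]_2) : 'M[R]_2 := 2^-1 *: (J + J^T).
Definition tens (a b : 'rV[R]_2) : 'M[R]_2 := a^T *m b.  (* a (x) b = a b^T *)
Definition sigma_d (mu1 mu4 mu5 : R) (D : 'M[R]_2) (n : 'rV[R]_2) : 'M[R]_2 :=
  (mu1 * (n *m D *m n^T) 0 0) *: tens n n + mu4 *: D
  + mu5 *: (tens (n *m D^T) n + tens n (n *m D^T)).
Definition Fpot (n : 'rV[R]_2) : R := 4^-1 * (vdot n n - 1) ^+ 2.
Definition fpot (n : 'rV[R]_2) : 'rV[R]_2 := (vdot n n - 1) *: n.

(* ((u . grad) v) for J = Jacobian of v: components sum_j u_j d_j v_i *)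
Definition convec (u : 'rV[R]_2) (J : 'M[R]_2) : 'rV[R]_2 := u *m J^T.

Definition ctri (Om : set (R * R)) (u : R * R -> 'rV[R]_2)
    (Ju : R * R -> 'M[R]_2) (v : R * R -> 'rV[R]_2) (Jv : R * R -> 'M[R]_2)
    (w : R * R -> 'rV[R]_2) : R :=
  integ Om (fun x => vdot (convec (u x) (Jv x)) (w x))
  + 2^-1 * integ Om (fun x => \tr (Ju x) * vdot (v x) (w x)).

Definition Etot (Om : set (R * R)) (lambda eps : R) (u : R * R -> 'rV[R]_2)
    (gphi : R * R -> 'rV[R]_2) (psi : R * R -> R) : R :=
  2^-1 * integ Om (fun x => vdot (u x) (u x))
  + lambda * (2^-1 * integ Om (fun x => psi x ^+ 2)
              + (eps ^+ 2)^-1 * integ Om (fun x => Fpot (gphi x))).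

End Defs.

From Pilot Require Import Defs.
Set Warnings "-notation-overridden,-ambiguous-paths,-notation-incompatible-prefix".
From mathcomp Require Import all_boot all_order all_algebra.
From mathcomp Require Import all_classical all_reals all_analysis.
From mathcomp Require Import ring lra.
Import Order.TTheory GRing.Theory Num.Theory.
Import numFieldNormedType.Exports.
Local Open Scope classical_set_scope.
Local Open Scope ring_scope.
Set Implicit Arguments.
Unset Strict Implicit.
Unset Printing Implicit Defensive.

(* Test the momentum equation with u, the incompressibility constraint with p
   and the phase-field equation with phi_t, and differentiate in time the
   auxiliary equation tested with psi: after summation the coupling terms
   cancel, leaving d/dt E_tot plus the dissipation, provided the convective
   term c(u,u,u) vanishes.  It does because u is an H^1-limit of test
   functions: integrating by parts against products of these test functions
   and passing to the limit shows that the two parts of c(u,u,u) cancel.  Every field is a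
   finite combination of fixed bounded basis functions with C^1 coefficients
   in time, so time derivatives commute with the space integrals. *)

Section MeasurableSets.
Variable R : realType.

(* The sigma-algebra of [T2] is a product of Lebesgue sigma-algebras; an open
   set is the countable union of the rational boxes it contains. *)
Definition rat_box (A : set (R * R)) (q : rat * rat * rat * rat) : set (R * R) :=
  let B := `]ratr q.1.1.1, ratr q.1.1.2[%classic `*` `]ratr q.1.2, ratr q.2[%classic in
  if pselect (B `<=` A) then B else set0.

Lemma open_measurable2 (A : set (R * R)) : open A -> measurable (A : set (T2 R)).
Proof.
move=> oA.
have mbox q : measurable (rat_box A q : set (T2 R)).
  rewrite /rat_box; case: pselect => ?; last exact: measurable0.
  by apply: measurableX; exact: measurable_itv.
suff -> : A = \bigcup_q rat_box A q.
  exact: countable_bigcupT_measurable (countableP _) mbox.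
apply/seteqP; split; last first.
  by move=> x [q _]; rewrite /rat_box; case: pselect => [AB /AB|].
move=> x Ax; have /nbhs_ballP[e /= e0 xeA] := oA x Ax.
have [q1 /[!in_itv]/= /andP[lq1 q1x]] : exists q : rat, ratr q \in `]x.1 - e, x.1[.
  by apply: rat_in_itvoo; rewrite ltrBlDr ltrDl.
have [q2 /[!in_itv]/= /andP[xq2 q2r]] : exists q : rat, ratr q \in `]x.1, x.1 + e[.
  by apply: rat_in_itvoo; rewrite ltrDl.
have [q3 /[!in_itv]/= /andP[lq3 q3x]] : exists q : rat, ratr q \in `]x.2 - e, x.2[.
  by apply: rat_in_itvoo; rewrite ltrBlDr ltrDl.
have [q4 /[!in_itv]/= /andP[xq4 q4r]] : exists q : rat, ratr q \in `]x.2, x.2 + e[.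
  by apply: rat_in_itvoo; rewrite ltrDl.
exists (q1, q2, q3, q4) => //; rewrite /rat_box /=; case: pselect => /= [_|]; last first.
  case=> -[a b] [/=]; rewrite !in_itv /= => /andP[a1 a2] /andP[b1 b2]; apply: xeA.
  by split; rewrite /ball /= ltr_norml; apply/andP; split; lra.
by split; rewrite /= in_itv /=; apply/andP.
Qed.

Lemma continuous_meas_on (Om : set (R * R)) (f : R * R -> R) :
  continuous f -> meas_on Om f.
Proof.
move=> cf mOm; apply: (measurability _ (measurable_realfun.RGenOpens.measurableE R)) => //.
move=> _ [_ [a [b ->] <-]]; apply: measurableI => //.
by apply: open_measurable2; move/continuousP : cf; apply; exact: interval_open.
Qed.

Definition box_bounded (Om : set (R * R)) : Prop :=
  exists M : R, forall x, Om x -> `|x.1| <= M /\ `|x.2| <= M.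

Lemma continuous_bdd_on (Om : set (R * R)) (f : R * R -> R) :
  box_bounded Om -> continuous f -> bdd_on Om f.
Proof.
move=> [M OmM] cf.
have cK : compact (`[-M, M]%classic `*` `[-M, M]%classic : set (R * R)).
  by apply: compact_setX; exact: segment_compact.
have [N [_ fN]] := compact_bounded (continuous_compact (continuous_subspaceT cf) cK).
exists (`|N| + 1) => x Omx; apply: (fN (`|N| + 1)); first by rewrite ltr_pwDr// ler_norm.
by exists x => //; have [? ?] := OmM x Omx; split; rewrite /= in_itv /= -ler_norml.
Qed.

Lemma box_bounded_lam2_fin (Om : set (R * R)) :
  box_bounded Om -> measurable (Om : set (T2 R)) -> (lam2 Om < +oo)%E.
Proof.
move=> [M OmM] mOm; pose B : set R := `[-M, M]%classic.
have mB : measurable (B `*` B : set (T2 R)) by apply: measurableX; exact: measurable_itv.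
apply: (@le_lt_trans _ _ (lam2 (B `*` B : set (T2 R)))).
  apply: le_measure; rewrite ?inE // => x Omx.
  by have [? ?] := OmM x Omx; split; rewrite /B /= in_itv /= -ler_norml.
rewrite /lam2 product_measure1E; try exact: measurable_itv.
have BE : (lebesgue_measure B < +oo)%E.
  by rewrite /B lebesgue_measure_itv /=; case: ifP => _; rewrite ?ltry.
by apply: lte_mul_pinfty => //; rewrite ge0_fin_numE.
Qed.

End MeasurableSets.

Section BoundedMeasurable.
Variable R : realType.
Variable Om : set (R * R).
Hypothesis mOm : measurable (Om : set (T2 R)).
Hypothesis finOm : (lam2 Om < +oo)%E.

Definition bdd_meas (f : R * R -> R) : Prop := meas_on Om f /\ bdd_on Om f.

Lemma bdd_meas_cst c : bdd_meas (fun _ => c).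
Proof. by split; [exact: measurable_cst | exists `|c|]. Qed.

Lemma bdd_measD f g : bdd_meas f -> bdd_meas g -> bdd_meas (fun x => f x + g x).
Proof.
move=> [mf [M fM]] [mg [N gN]]; split; first exact: measurable_realfun.measurable_funD.
exists (M + N) => x Omx; apply: le_trans (ler_normD _ _) _.
by apply: lerD; [exact: fM | exact: gN].
Qed.

Lemma bdd_measN f : bdd_meas f -> bdd_meas (fun x => - f x).
Proof.
move=> [mf [M fM]]; split; first exact: measurable_realfun.measurable_funN.
by exists M => x Omx; rewrite normrN; exact: fM.
Qed.

Lemma bdd_measB f g : bdd_meas f -> bdd_meas g -> bdd_meas (fun x => f x - g x).
Proof. by move=> bf bg; apply: bdd_measD => //; exact: bdd_measN. Qed.

Lemma bdd_measM f g : bdd_meas f -> bdd_meas g -> bdd_meas (fun x => f x * g x).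
Proof.
move=> [mf [M fM]] [mg [N gN]]; split; first exact: measurable_realfun.measurable_funM.
by exists (M * N) => x Omx; rewrite normrM; apply: ler_pM; [| | exact: fM | exact: gN].
Qed.

Lemma bdd_measM3 f g h : bdd_meas f -> bdd_meas g -> bdd_meas h ->
  bdd_meas (fun x => f x * g x * h x).
Proof. by move=> bf bg bh; apply: bdd_measM => //; exact: bdd_measM. Qed.

Lemma bdd_measZ k f : bdd_meas f -> bdd_meas (fun x => k * f x).
Proof. exact/bdd_measM/bdd_meas_cst. Qed.

Lemma bdd_meas_norm f : bdd_meas f -> bdd_meas (fun x => `|f x|).
Proof.
move=> [mf [M fM]]; split; last by exists M => x Omx; rewrite normr_id; exact: fM.
exact: measurableT_comp (@measurable_realfun.normr_measurable R setT) mf.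
Qed.

Lemma bdd_meas_sum (I : Type) (r : seq I) (F : I -> R * R -> R) :
  (forall i, bdd_meas (F i)) -> bdd_meas (fun x => \sum_(i <- r) F i x).
Proof.
move=> bF; elim: r => [|i r IH].
  by under [fun x => _]funext do rewrite big_nil; exact: bdd_meas_cst.
by under [fun x => _]funext do rewrite big_cons; exact: bdd_measD.
Qed.

Lemma bdd_meas_integrable f :
  bdd_meas f -> (@lam2 R).-integrable (Om : set (T2 R)) (EFin \o f).
Proof.
move=> [mf [M fM]]; apply: measurable_bounded_integrable => //.
exists M; split; first exact: num_real.
by move=> M' MM' x Omx; apply: le_trans (fM x Omx) _; exact: ltW.
Qed.

Lemma eq_integ f g : (forall x, Om x -> f x = g x) -> integ Om f = integ Om g.
Proof. by move=> fg; apply: eq_Rintegral => x /set_mem; exact: fg. Qed.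

Lemma integD f g : bdd_meas f -> bdd_meas g ->
  integ Om (fun x => f x + g x) = integ Om f + integ Om g.
Proof. by move=> bf bg; apply: RintegralD => //; exact: bdd_meas_integrable. Qed.

Lemma integB f g : bdd_meas f -> bdd_meas g ->
  integ Om (fun x => f x - g x) = integ Om f - integ Om g.
Proof. by move=> bf bg; apply: RintegralB => //; exact: bdd_meas_integrable. Qed.

Lemma integZl k f : bdd_meas f -> integ Om (fun x => k * f x) = k * integ Om f.
Proof. by move=> bf; apply: RintegralZl => //; exact: bdd_meas_integrable. Qed.

Lemma integ_cst c : integ Om (fun _ => c) = c * fine (lam2 Om).
Proof. exact: Rintegral_cst. Qed.

Lemma integ_sum (I : Type) (r : seq I) (F : I -> R * R -> R) :
  (forall i, bdd_meas (F i)) ->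
  integ Om (fun x => \sum_(i <- r) F i x) = \sum_(i <- r) integ Om (F i).
Proof.
move=> bF; elim: r => [|i r IH].
  by rewrite big_nil (@eq_integ _ (fun _ => 0)) ?integ_cst ?mul0r // => x _; rewrite big_nil.
rewrite big_cons -IH -integD //; last exact: bdd_meas_sum.
by apply: eq_integ => x _; rewrite big_cons.
Qed.

Lemma le_integ f g : bdd_meas f -> bdd_meas g -> (forall x, Om x -> f x <= g x) ->
  integ Om f <= integ Om g.
Proof. by move=> bf bg fg; apply: le_Rintegral => //; exact: bdd_meas_integrable. Qed.

Lemma le_normr_integ f : bdd_meas f -> `|integ Om f| <= integ Om (fun x => `|f x|).
Proof. by move=> bf; apply: le_normr_Rintegral => //; exact: bdd_meas_integrable. Qed.

End BoundedMeasurable.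

Section ProductRule.
Variables (R : realType) (V : normedModType R).

Lemma is_derive_sum_mul (I : Type) (r : seq I) (A B : I -> V -> R) (dA dB : I -> R)
    (x v : V) :
  (forall i, is_derive x v (A i) (dA i)) -> (forall i, is_derive x v (B i) (dB i)) ->
  is_derive x v (fun y => \sum_(i <- r) A i y * B i y)
                (\sum_(i <- r) (dA i * B i x + A i x * dB i)).
Proof.
move=> hA hB; elim: r => [|i r IH].
  rewrite big_nil (_ : (fun _ => _) = cst 0); first exact: is_derive_cst.
  by apply/funext => y; rewrite big_nil.
rewrite big_cons (_ : (fun _ => _) = (A i * B i)%R + (fun y => \sum_(j <- r) A j y * B j y)).
  apply: is_derive_eq (is_deriveD (is_deriveM (hA i) (hB i)) IH) _.
  by congr (_ + _); rewrite /GRing.scale /=; ring.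
by apply/funext => y; rewrite big_cons.
Qed.

Lemma deriveM_fun (f g : V -> R) (x v : V) : derivable f x v -> derivable g x v ->
  'D_v (fun y => f y * g y) x = 'D_v f x * g x + f x * 'D_v g x.
Proof.
move=> df dg; rewrite (deriveM df dg) /GRing.scale /=.
by rewrite addrC [g x * _]mulrC.
Qed.

End ProductRule.

Section SeparatedExpansions.
Variable R : realType.
Variable Om : set (R * R).
Hypothesis mOm : measurable (Om : set (T2 R)).
Hypothesis finOm : (lam2 Om < +oo)%E.
Variable t : R.

(* [H s x] is a finite sum of products [c_i s * h_i x], the [c_i] being
   differentiable at [t] and the [h_i] bounded measurable, and [H'] is its
   derivative in [s] at [t]; for such [H] time derivatives commute with
   [integ]. *)
Definition sep_deriv (H : R -> R * R -> R) (H' : R * R -> R) : Prop :=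
  exists (I : finType) (c : I -> R -> R) (h : I -> R * R -> R),
  [/\ forall i, derivable (c i) t 1, forall i, bdd_meas Om (h i),
      forall s x, H s x = \sum_i c i s * h i x &
      forall x, H' x = \sum_i derive1 (c i) t * h i x].

Lemma sep_deriv_ext H1 H1' H2 H2' : sep_deriv H1 H1' ->
  (forall s x, H1 s x = H2 s x) -> (forall x, H1' x = H2' x) -> sep_deriv H2 H2'.
Proof.
move=> [I [c [h [dc bh e1 f1]]]] eH eH'; exists I, c, h.
by split => // [s x|x]; rewrite -?eH -?eH'.
Qed.

Lemma sep_deriv_coef (c : R -> R) h : derivable c t 1 -> bdd_meas Om h ->
  sep_deriv (fun s x => c s * h x) (fun x => derive1 c t * h x).
Proof.
by move=> dc bh; exists 'I_1, (fun=> c), (fun=> h); split => // [s x|x]; rewrite big_ord1.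
Qed.

Lemma sep_deriv_cst h : bdd_meas Om h -> sep_deriv (fun _ x => h x) (fun _ => 0).
Proof.
move=> bh; have d1 := derivable_cst (1 : R) t 1.
apply: sep_deriv_ext (sep_deriv_coef d1 bh) _ _ => [s x|x] /=.
  by rewrite mul1r.
by rewrite derive1E derive_cst mul0r.
Qed.

Lemma sep_derivD H1 H1' H2 H2' : sep_deriv H1 H1' -> sep_deriv H2 H2' ->
  sep_deriv (fun s x => H1 s x + H2 s x) (fun x => H1' x + H2' x).
Proof.
move=> [I [c [h [dc bh e1 f1]]]] [J [d [g [dd bg e2 f2]]]].
exists (I + J)%type, (fun k => match k with inl i => c i | inr j => d j end),
  (fun k => match k with inl i => h i | inr j => g j end).
by split=> [[]|[]|s x|x] //; rewrite big_sumType ?e1 ?e2 ?f1 ?f2.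
Qed.

Lemma sep_derivM H1 H1' H2 H2' : sep_deriv H1 H1' -> sep_deriv H2 H2' ->
  sep_deriv (fun s x => H1 s x * H2 s x) (fun x => H1' x * H2 t x + H1 t x * H2' x).
Proof.
move=> [I [c [h [dc bh e1 f1]]]] [J [d [g [dd bg e2 f2]]]].
exists (I * J)%type, (fun k s => c k.1 s * d k.2 s), (fun k x => h k.1 x * g k.2 x).
split=> [k|k|s x|x].
- exact: derivableM.
- exact: bdd_measM.
- rewrite e1 e2 mulr_suml; under eq_bigr do rewrite mulr_sumr.
  by rewrite pair_bigA; apply: eq_bigr => -[i j] _ /=; ring.
- rewrite f1 f2 e1 e2 !mulr_suml -big_split /=.
  under eq_bigr do rewrite !mulr_sumr -big_split.
  rewrite pair_bigA; apply: eq_bigr => -[i j] _ /=.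
  by rewrite [in RHS]derive1E deriveM_fun // -!derive1E; ring.
Qed.

Lemma sep_derivMr H H' g : sep_deriv H H' -> bdd_meas Om g ->
  sep_deriv (fun s x => H s x * g x) (fun x => H' x * g x).
Proof.
move=> dH bg; apply: sep_deriv_ext (sep_derivM dH (sep_deriv_cst bg)) _ _ => // x.
by rewrite mulr0 addr0.
Qed.

Lemma sep_derivN H H' : sep_deriv H H' -> sep_deriv (fun s x => - H s x) (fun x => - H' x).
Proof.
move=> dH; apply: sep_deriv_ext (sep_derivM (sep_deriv_cst (bdd_meas_cst Om (-1))) dH) _ _.
  by move=> s x; rewrite mulN1r.
by move=> x; rewrite mul0r add0r mulN1r.
Qed.

Lemma sep_deriv_sum (J : Type) (r : seq J) (F : J -> R -> R * R -> R) F' :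
  (forall j, sep_deriv (F j) (F' j)) ->
  sep_deriv (fun s x => \sum_(j <- r) F j s x) (fun x => \sum_(j <- r) F' j x).
Proof.
move=> dF; elim: r => [|j r IH].
  by apply: sep_deriv_ext (sep_deriv_cst (bdd_meas_cst Om 0)) _ _ => *; rewrite big_nil.
by apply: sep_deriv_ext (sep_derivD (dF j) IH) _ _ => *; rewrite big_cons.
Qed.

Lemma bdd_meas_sep_deriv H H' : sep_deriv H H' ->
  (forall s, bdd_meas Om (H s)) /\ bdd_meas Om H'.
Proof.
move=> [I [c [h [_ bh eH eH']]]]; split => [s|].
  rewrite (_ : H s = fun x => \sum_i c i s * h i x); last exact/funext/eH.
  by apply: bdd_meas_sum => i; exact: bdd_measZ.
rewrite (_ : H' = fun x => \sum_i derive1 (c i) t * h i x); last exact/funext.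
by apply: bdd_meas_sum => i; exact: bdd_measZ.
Qed.

Lemma is_derive_integ_sep H H' : sep_deriv H H' ->
  is_derive t 1 (fun s => integ Om (H s)) (integ Om H').
Proof.
move=> [I [c [h [dc bh eH eH']]]].
have integE (a : I -> R) :
    integ Om (fun x => \sum_i a i * h i x) = \sum_i a i * integ Om (h i).
  rewrite integ_sum //; last by move=> i; exact: bdd_measZ.
  by apply: eq_bigr => i _; exact: integZl.
have -> : integ Om H' = integ Om (fun x => \sum_i derive1 (c i) t * h i x).
  by apply: eq_integ => x _; exact: eH'.
have -> : (fun s => integ Om (H s)) = fun s => \sum_i c i s * cst (integ Om (h i)) s.
  by apply/funext => s; rewrite -integE; apply: eq_integ => x _; exact: eH.
rewrite integE; apply: is_derive_eq.
  exact: is_derive_sum_mul (fun i => derivableP (dc i)) (fun i => is_derive_cst _ _ _).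
by apply: eq_bigr => i _; rewrite mulr0 addr0 derive1E.
Qed.

Lemma sep_deriv_integ_eq0 H H' : (\forall s \near t, integ Om (H s) = 0) ->
  sep_deriv H H' -> integ Om H' = 0.
Proof.
move=> H0 /is_derive_integ_sep dH.
have dH0 : is_derive t 1 (cst 0 : R -> R) (integ Om H') := near_eq_is_derive H0 dH.
by rewrite -(@derive_val _ _ _ _ _ _ _ dH0) derive_cst.
Qed.

End SeparatedExpansions.

Section TestFunctions.
Variable R : realType.

Lemma iterD_mul (f g : R * R -> R) : smooth f -> smooth g ->
  forall s, exists L : seq (seq 'I_2 * seq 'I_2),
  Defs.iterD s (fun x => f x * g x) =
  fun x => \sum_(q <- L) Defs.iterD q.1 f x * Defs.iterD q.2 g x.
Proof.
move=> sf sg; elim => [|i s [L IH]].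
  by exists [:: ([::], [::])]; apply/funext => x; rewrite big_seq1.
exists ([seq (i :: q.1, q.2) | q <- L] ++ [seq (q.1, i :: q.2) | q <- L]).
apply/funext => x; rewrite /= IH /partial.
have D := is_derive_sum_mul L (fun q => derivableP ((sf q.1).2 i x))
                                (fun q => derivableP ((sg q.2).2 i x)).
by rewrite derive_val big_cat /= !big_map -big_split.
Qed.

Lemma smooth_mul (f g : R * R -> R) : smooth f -> smooth g ->
  smooth (fun x => f x * g x).
Proof.
move=> sf sg s; have [L ->] := iterD_mul sf sg s; split => [x|i x].
  elim: L => [|q L IH].
    by under [fun x => _]funext do rewrite big_nil; exact: cst_continuous.
  rewrite (_ : (fun x => _) = (Defs.iterD q.1 f \* Defs.iterD q.2 g)%R +
              (fun x => \sum_(q <- L) Defs.iterD q.1 f x * Defs.iterD q.2 g x)).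
    by apply: continuousD IH; apply: continuousM; [exact: (sf _).1 | exact: (sg _).1].
  by apply/funext => y; rewrite big_cons.
have D := is_derive_sum_mul L (fun q => derivableP ((sf q.1).2 i x))
                               (fun q => derivableP ((sg q.2).2 i x)).
exact: ex_derive.
Qed.

Lemma partialM (f g : R * R -> R) (i : 'I_2) x : smooth f -> smooth g ->
  partial i (fun y => f y * g y) x = partial i f x * g x + f x * partial i g x.
Proof. by move=> sf sg; exact: deriveM_fun ((sf [::]).2 i x) ((sg [::]).2 i x). Qed.

Lemma test_funM Om (f g : R * R -> R) : test_fun Om f -> test_fun Om g ->
  test_fun Om (fun x => f x * g x).
Proof.
move=> [sf [K [cK [KOm fK]]]] [sg _]; split; first exact: smooth_mul.
by exists K; split => //; split => // x Kx; rewrite fK // mul0r.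
Qed.

End TestFunctions.

Section ProductConvergence.
Variable R : realType.

Lemma normr_le_sqr_div (p d : R) : 0 < d -> `|p| <= p ^+ 2 / d + d.
Proof.
move=> d0; rewrite -[p ^+ 2]real_normK ?num_real // -(@ler_pM2r _ d) //.
rewrite mulrDl mulfVK ?gt_eqF //; have := sqr_ge0 (`|p| - d); nra.
Qed.

Lemma normrM_le_sqrD (p q : R) : `|p| * `|q| <= p ^+ 2 + q ^+ 2.
Proof.
rewrite -[p ^+ 2]real_normK ?num_real // -[q ^+ 2]real_normK ?num_real //.
have := normr_ge0 p; have := normr_ge0 q; nra.
Qed.

(* The cross terms are absorbed by [|p| <= p^2/d + d], so no bound on [fn] or
   [gn] is needed. *)
Lemma trilinear_diff_bound (A B d a f g fn gn : R) : 0 < d ->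
  `|a| <= A -> `|f| <= B -> `|g| <= B ->
  `|a * fn * gn - a * f * g| <=
  A * (1 + B / d) * ((fn - f) ^+ 2 + (gn - g) ^+ 2) + 2 * A * B * d.
Proof.
move=> d0 aA fB gB; have B0 : 0 <= B := le_trans (normr_ge0 f) fB.
set p := fn - f; set q := gn - g.
have -> : a * fn * gn - a * f * g = a * (p * q + p * g + f * q) by rewrite /p /q; ring.
have pqB : `|p * q + p * g + f * q| <= `|p| * `|q| + `|p| * B + B * `|q|.
  rewrite -!normrM; apply: le_trans (ler_normD _ _) _; apply: lerD.
    by apply: le_trans (ler_normD _ _) _; rewrite lerD2l !normrM ler_pM.
  by rewrite normrM ler_pM.
have key : `|p| * `|q| + `|p| * B + B * `|q| <=
           (p ^+ 2 + q ^+ 2) + B * (p ^+ 2 / d + d) + B * (q ^+ 2 / d + d).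
  apply: lerD; last exact/ler_wpM2l/normr_le_sqr_div.
  apply: lerD; first exact: normrM_le_sqrD.
  by rewrite mulrC; exact/ler_wpM2l/normr_le_sqr_div.
have -> : A * (1 + B / d) * ((fn - f) ^+ 2 + (gn - g) ^+ 2) + 2 * A * B * d =
          A * ((p ^+ 2 + q ^+ 2) + B * (p ^+ 2 / d + d) + B * (q ^+ 2 / d + d)).
  by rewrite /p /q; field; rewrite gt_eqF.
by rewrite normrM; apply: ler_pM => //; exact: le_trans pqB key.
Qed.

Lemma cvg_from_bound (xn : nat -> R) (x : R) (yn : nat -> R) (K : R -> R) (C : R) :
  yn @ \oo --> 0 ->
  (forall d, 0 < d -> forall n, `|xn n - x| <= K d * yn n + C * d) ->
  xn @ \oo --> x.
Proof.
move=> y0 bound; apply/cvgrPdist_lt => e e0.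
pose d := e / (2 * (`|C| + 1)).
have d0 : 0 < d by rewrite divr_gt0 // mulr_gt0 // ltr_pwDr.
have Cd : C * d < e / 2.
  have -> : e / 2 = (`|C| + 1) * d by rewrite /d; field; rewrite gt_eqF // ltr_pwDr.
  by apply: (@le_lt_trans _ _ (`|C| * d)); rewrite ?ler_pM2r ?ltr_pM2r ?ler_norm ?ltrDl.
pose eta := e / (2 * (`|K d| + 1)).
have eta0 : 0 < eta by rewrite divr_gt0 // mulr_gt0 // ltr_pwDr.
move: y0 => /cvgrPdist_lt /(_ eta eta0); apply: filterS => n.
rewrite sub0r normrN distrC => yeta; apply: le_lt_trans (bound d d0 n) _.
have Ky : K d * yn n <= e / 2.
  have -> : e / 2 = (`|K d| + 1) * eta by rewrite /eta; field; rewrite gt_eqF // ltr_pwDr.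
  apply: le_trans (ler_norm _) _; rewrite normrM.
  by apply: ler_pM => //; [rewrite lerDl | exact: ltW].
by rewrite [e]splitr; apply: ler_ltD.
Qed.

End ProductConvergence.

Section IntegralProductConvergence.
Variable R : realType.
Variable Om : set (R * R).
Hypothesis mOm : measurable (Om : set (T2 R)).
Hypothesis finOm : (lam2 Om < +oo)%E.

Lemma bdd_meas_sqr f : bdd_meas Om f -> bdd_meas Om (fun x => f x ^+ 2).
Proof. by move=> bf; under [fun x => _]funext do rewrite expr2; exact: bdd_measM. Qed.

Lemma integ_trilinear_diff_bound (a f g fn gn : R * R -> R) (A B d : R) :
  bdd_meas Om a -> bdd_meas Om f -> bdd_meas Om g -> bdd_meas Om fn -> bdd_meas Om gn ->
  0 < d -> (forall x, Om x -> `|a x| <= A) ->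
  (forall x, Om x -> `|f x| <= B) -> (forall x, Om x -> `|g x| <= B) ->
  `|integ Om (fun x => a x * fn x * gn x) - integ Om (fun x => a x * f x * g x)| <=
  A * (1 + B / d) * (integ Om (fun x => (fn x - f x) ^+ 2) +
                     integ Om (fun x => (gn x - g x) ^+ 2))
  + 2 * A * B * d * fine (lam2 Om).
Proof.
move=> ba bf bg bfn bgn d0 aA fB gB.
have bafg := bdd_measM3 ba bf bg; have bafgn := bdd_measM3 ba bfn bgn.
have bf2 := bdd_meas_sqr (bdd_measB bfn bf); have bg2 := bdd_meas_sqr (bdd_measB bgn bg).
rewrite -(integB mOm finOm bafgn bafg) -(integD mOm finOm bf2 bg2) -integZl //;
  last exact: bdd_measD.
rewrite -(integ_cst mOm) -(integD mOm finOm); first last.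
- exact: bdd_meas_cst.
- by apply: bdd_measZ; exact: bdd_measD.
apply: le_trans (le_normr_integ mOm finOm (bdd_measB bafgn bafg)) _.
apply: le_integ => //; first exact/bdd_meas_norm/bdd_measB.
  by apply: bdd_measD; [apply: bdd_measZ; exact: bdd_measD | exact: bdd_meas_cst].
by move=> x Omx; apply: trilinear_diff_bound; [| exact: aA | exact: fB | exact: gB].
Qed.

Lemma cvg_integ_trilinear (a f g : R * R -> R) (fn gn : nat -> R * R -> R) :
  bdd_meas Om a -> bdd_meas Om f -> bdd_meas Om g ->
  (forall n, bdd_meas Om (fn n)) -> (forall n, bdd_meas Om (gn n)) ->
  (fun n => integ Om (fun x => (fn n x - f x) ^+ 2)) @ \oo --> 0 ->
  (fun n => integ Om (fun x => (gn n x - g x) ^+ 2)) @ \oo --> 0 ->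
  (fun n => integ Om (fun x => a x * fn n x * gn n x)) @ \oo -->
    integ Om (fun x => a x * f x * g x).
Proof.
move=> ba bf bg bfn bgn f0 g0.
have [[_ [A aA]] [_ [Bf fB]]] := (ba, bf); have [_ [Bg gB]] := bg.
pose B := `|Bf| + `|Bg|.
have fB' x : Om x -> `|f x| <= B.
  by move=> /fB /le_trans; apply; apply: le_trans (ler_norm _) _; rewrite lerDl.
have gB' x : Om x -> `|g x| <= B.
  by move=> /gB /le_trans; apply; apply: le_trans (ler_norm _) _; rewrite lerDr.
apply: (@cvg_from_bound _ _ _
  (fun n => integ Om (fun x => (fn n x - f x) ^+ 2) + integ Om (fun x => (gn n x - g x) ^+ 2))
  (fun d => A * (1 + B / d)) (2 * A * B * fine (lam2 Om))).
  by have := cvgD f0 g0; rewrite addr0; exact.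
move=> d d0 n; rewrite [_ * d]mulrAC.
exact: integ_trilinear_diff_bound.
Qed.

End IntegralProductConvergence.

Section FiniteElementFunctions.
Variable R : realType.
Variable Om : set (R * R).
Hypothesis mOm : measurable (Om : set (T2 R)).
Hypothesis finOm : (lam2 Om < +oo)%E.
Hypothesis Om_bounded : box_bounded Om.

Lemma test_fun_bdd_meas f : test_fun Om f -> bdd_meas Om f.
Proof.
move=> [sf _]; have cf := (sf [::]).1.
by split; [exact: continuous_meas_on | exact: continuous_bdd_on].
Qed.

Lemma test_fun_partial_bdd_meas f i : test_fun Om f -> bdd_meas Om (partial i f).
Proof.
move=> [sf _]; have cf := (sf [:: i]).1.
by split; [exact: continuous_meas_on | exact: continuous_bdd_on].
Qed.

Lemma lcvE n m p (a : 'I_n -> R) (b : 'I_n -> R * R -> 'M[R]_(m, p)) x i j :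
  lcv a b x i j = \sum_(k < n) a k * b k x i j.
Proof. by rewrite /lcv summxE; apply: eq_bigr => k _; rewrite mxE. Qed.

Lemma bdd_meas_lcs n (a : 'I_n -> R) (b : 'I_n -> R * R -> R) :
  (forall k, bdd_meas Om (b k)) -> bdd_meas Om (lcs a b).
Proof. by move=> bb; apply: bdd_meas_sum => k; exact: bdd_measZ. Qed.

Lemma bdd_meas_lcv n m p (a : 'I_n -> R) (b : 'I_n -> R * R -> 'M[R]_(m, p)) i j :
  (forall k, bdd_meas Om (fun x => b k x i j)) -> bdd_meas Om (fun x => lcv a b x i j).
Proof.
move=> bb; under [fun x => _]funext do rewrite lcvE.
by apply: bdd_meas_sum => k; exact: bdd_measZ.
Qed.

Lemma weak_partial_lcs n (a : 'I_n -> R) (b g : 'I_n -> R * R -> R) i :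
  (forall k, bdd_meas Om (b k)) -> (forall k, bdd_meas Om (g k)) ->
  (forall k, weak_partial Om (b k) i (g k)) -> weak_partial Om (lcs a b) i (lcs a g).
Proof.
move=> bb bg wb phi tphi.
have bphi := test_fun_bdd_meas tphi; have bdphi := test_fun_partial_bdd_meas i tphi.
have lcsM (h : 'I_n -> R * R -> R) (psi : R * R -> R) :
    (forall k, bdd_meas Om (h k)) -> bdd_meas Om psi ->
    integ Om (fun x => lcs a h x * psi x) =
    \sum_(k < n) a k * integ Om (fun x => h k x * psi x).
  move=> bh bpsi; rewrite (@eq_integ _ _ _ (fun x => \sum_(k < n) a k * (h k x * psi x))).
    rewrite integ_sum // => [|k]; last exact/bdd_measZ/bdd_measM.
    by apply: eq_bigr => k _; rewrite integZl //; exact: bdd_measM.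
  by move=> x _; rewrite /lcs mulr_suml; apply: eq_bigr => k _; rewrite mulrA.
rewrite lcsM // lcsM // -sumrN; apply: eq_bigr => k _.
by rewrite wb // mulrN.
Qed.

Lemma fe_scalar_bdd_meas b g : fe_scalar Om b g ->
  bdd_meas Om b /\ forall i, bdd_meas Om (fun x => g x 0 i).
Proof. by move=> [mb [bb fg]]; split => // i; have [? [? _]] := fg i. Qed.

Lemma fe_scalar_lcs n (a : 'I_n -> R) b (g : 'I_n -> R * R -> 'rV[R]_2) :
  (forall k, fe_scalar Om (b k) (g k)) -> fe_scalar Om (lcs a b) (lcv a g).
Proof.
move=> fb; have bb k := (fe_scalar_bdd_meas (fb k)).1.
have bg k := (fe_scalar_bdd_meas (fb k)).2.
have [mab bab] := bdd_meas_lcs a bb.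
split=> //; split=> // i; have [mag bag] := bdd_meas_lcv a (fun k => bg k i).
split=> //; split=> //.
have -> : (fun x => lcv a g x 0 i) = lcs a (fun k x => g k x 0 i).
  by apply/funext => x; rewrite lcvE.
apply: weak_partial_lcs => [k|k|k]; [exact: bb | exact: bg |].
by have [_ [_ /(_ i) [_ [_ ?]]]] := fb k.
Qed.

Lemma fe_vector_lcv n (a : 'I_n -> R) (b : 'I_n -> R * R -> 'rV[R]_2)
    (J : 'I_n -> R * R -> 'M[R]_2) :
  (forall k, fe_vector Om (b k) (J k)) -> fe_vector Om (lcv a b) (lcv a J).
Proof.
move=> fb c.
have -> : (fun x => lcv a b x 0 c) = lcs a (fun k x => b k x 0 c).
  by apply/funext => x; rewrite lcvE.
have -> : (fun x => row c (lcv a J x)) = lcv a (fun k x => row c (J k x)).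
  apply/funext => x; apply/rowP => j; rewrite mxE !lcvE.
  by apply: eq_bigr => k _; rewrite mxE.
exact: fe_scalar_lcs (fun k => fb k c).
Qed.

Lemma fe_vector_entries U J : fe_vector Om U J ->
  [/\ forall c, bdd_meas Om (fun x => U x 0 c),
      forall c i, bdd_meas Om (fun x => J x c i) &
      forall c i, weak_partial Om (fun x => U x 0 c) i (fun x => J x c i)].
Proof.
have rowE c i : (fun x => row c (J x) 0 i) = (fun x => J x c i).
  by apply/funext => x; rewrite mxE.
move=> fU; split=> [c|c i|c i]; first exact: (fe_scalar_bdd_meas (fU c)).1.
  by rewrite -rowE; exact: (fe_scalar_bdd_meas (fU c)).2.
by have [_ [_ /(_ i) [_ [_]]]] := fU c; rewrite rowE.
Qed.

End FiniteElementFunctions.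

Section ConvectiveTerm.
Variable R : realType.
Variable Om : set (R * R).
Hypothesis mOm : measurable (Om : set (T2 R)).
Hypothesis finOm : (lam2 Om < +oo)%E.
Hypothesis Om_bounded : box_bounded Om.
Variables (U : R * R -> 'rV[R]_2) (J : R * R -> 'M[R]_2).
Hypothesis feU : fe_vector Om U J.
Hypothesis U0 : H10 Om U J.

(* Test the weak derivative of [U_i] against [phi_j * phi_i], where the
   [phi_c] approximate [U_c] in H^1, and pass to the limit. *)
Lemma H10_integ_by_parts i j :
  integ Om (fun x => U x 0 i * J x j j * U x 0 i) +
  integ Om (fun x => U x 0 i * U x 0 j * J x i j) =
  - integ Om (fun x => U x 0 i * U x 0 j * J x i j).
Proof.
have [bU bJ wU] := fe_vector_entries feU; have [phi [tphi phiU]] := U0.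
have bphi n c := test_fun_bdd_meas Om_bounded (tphi n c).
have bdphi n c := test_fun_partial_bdd_meas Om_bounded j (tphi n c).
pose Y n := integ Om (fun x => U x 0 i * partial j (phi n j) x * phi n i x).
pose X n := integ Om (fun x => U x 0 i * phi n j x * partial j (phi n i) x).
pose Z n := integ Om (fun x => J x i j * phi n j x * phi n i x).
have YXZ n : Y n + X n = - Z n.
  rewrite /Y /X /Z -(integD mOm finOm (bdd_measM3 (bU i) (bdphi n j) (bphi n i))
                                    (bdd_measM3 (bU i) (bphi n j) (bdphi n i))).
  rewrite (@eq_integ _ _ _ (fun x => U x 0 i * partial j (fun y => phi n j y * phi n i y) x)).
    rewrite (wU i j _ (test_funM (tphi n j) (tphi n i))); congr (- _).
    by apply: eq_integ => x _; ring.
  by move=> x _; rewrite (partialM _ _ (tphi n j).1 (tphi n i).1); ring.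
have cY : Y @ \oo --> integ Om (fun x => U x 0 i * J x j j * U x 0 i).
  by apply: cvg_integ_trilinear => //; [exact: ((phiU j).2 j) | exact: (phiU i).1].
have cX : X @ \oo --> integ Om (fun x => U x 0 i * U x 0 j * J x i j).
  by apply: cvg_integ_trilinear => //; [exact: (phiU j).1 | exact: ((phiU i).2 j)].
have cZ : Z @ \oo --> integ Om (fun x => U x 0 i * U x 0 j * J x i j).
  rewrite (@eq_integ _ _ _ (fun x => J x i j * U x 0 j * U x 0 i)); last by move=> x _; ring.
  by apply: cvg_integ_trilinear => //; [exact: (phiU j).1 | exact: (phiU i).1].
have c2 : (fun n => Y n + X n) @ \oo -->
    - integ Om (fun x => U x 0 i * U x 0 j * J x i j).
  by rewrite (_ : (fun n => _) = fun n => - Z n); [exact: cvgN | apply/funext].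
exact: cvg_unique _ (cvgD cY cX) c2.
Qed.

Lemma ctri_self0 : ctri Om U J U J U = 0.
Proof.
have [bU bJ _] := fe_vector_entries feU.
rewrite /ctri (@eq_integ _ _ _
  (fun x => \sum_(i < 2) \sum_(j < 2) U x 0 i * U x 0 j * J x i j)); last first.
  move=> x _; rewrite /vdot /convec; apply: eq_bigr => i _; rewrite !mxE mulr_suml.
  by apply: eq_bigr => j _; rewrite !mxE; ring.
rewrite (@eq_integ _ _ (fun x => \tr (J x) * vdot (U x) (U x))
  (fun x => \sum_(i < 2) \sum_(j < 2) U x 0 i * J x j j * U x 0 i)); last first.
  move=> x _; rewrite /vdot /mxtrace mulr_sumr; apply: eq_bigr => i _ /=.
  by rewrite mulr_suml; apply: eq_bigr => j _; ring.
have bX i j : bdd_meas Om (fun x => U x 0 i * U x 0 j * J x i j) by exact: bdd_measM3.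
have bY i j : bdd_meas Om (fun x => U x 0 i * J x j j * U x 0 i) by exact: bdd_measM3.
rewrite !integ_sum // => [|i|i]; try by apply: bdd_meas_sum.
under eq_bigr do rewrite integ_sum //.
under [X in _ * X]eq_bigr do rewrite integ_sum //.
rewrite mulr_sumr -big_split big1 // => i _; rewrite mulr_sumr -big_split big1 // => j _.
by have := H10_integ_by_parts i j; rewrite /=; lra.
Qed.

End ConvectiveTerm.

Lemma vdotC (R : realType) (a b : 'rV[R]_2) : vdot a b = vdot b a.
Proof. by apply: eq_bigr => i _; rewrite mulrC. Qed.

Lemma vdotZl (R : realType) (k : R) (a b : 'rV[R]_2) : vdot (k *: a) b = k * vdot a b.
Proof. by rewrite /vdot mulr_sumr; apply: eq_bigr => i _; rewrite mxE mulrA. Qed.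

Section EnergyIdentities.
Variable R : realType.
Variable Om : set (R * R).
Hypothesis mOm : measurable (Om : set (T2 R)).
Hypothesis finOm : (lam2 Om < +oo)%E.
Variable t : R.

Lemma bdd_meas_vdot (f g : R * R -> 'rV[R]_2) :
  (forall c, bdd_meas Om (fun x => f x 0 c)) -> (forall c, bdd_meas Om (fun x => g x 0 c)) ->
  bdd_meas Om (fun x => vdot (f x) (g x)).
Proof. by move=> bf bg; apply: bdd_meas_sum => c; exact: bdd_measM. Qed.

Lemma sep_deriv_lcs n (a : 'I_n -> R -> R) (b : 'I_n -> R * R -> R) :
  (forall k, derivable (a k) t 1) -> (forall k, bdd_meas Om (b k)) ->
  sep_deriv Om t (fun s => lcs (fun k => a k s) b) (lcs (fun k => derive1 (a k) t) b).
Proof. by move=> da bb; apply: sep_deriv_sum => k; exact: sep_deriv_coef. Qed.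

Lemma sep_deriv_lcv n (a : 'I_n -> R -> R) (b : 'I_n -> R * R -> 'rV[R]_2) c :
  (forall k, derivable (a k) t 1) -> (forall k, bdd_meas Om (fun x => b k x 0 c)) ->
  sep_deriv Om t (fun s x => lcv (fun k => a k s) b x 0 c)
                 (fun x => lcv (fun k => derive1 (a k) t) b x 0 c).
Proof.
move=> da bb; apply: sep_deriv_ext (sep_deriv_lcs da bb) _ _ => *; exact/esym/lcvE.
Qed.

Lemma sep_deriv_vdot (V W : R -> R * R -> 'rV[R]_2) (V' W' : R * R -> 'rV[R]_2) :
  (forall c, sep_deriv Om t (fun s x => V s x 0 c) (fun x => V' x 0 c)) ->
  (forall c, sep_deriv Om t (fun s x => W s x 0 c) (fun x => W' x 0 c)) ->
  sep_deriv Om t (fun s x => vdot (V s x) (W s x))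
    (fun x => vdot (V' x) (W t x) + vdot (V t x) (W' x)).
Proof.
move=> dV dW; apply: sep_deriv_ext (sep_deriv_sum _ (fun c => sep_derivM (dV c) (dW c))) _ _.
  by [].
by move=> x; rewrite /vdot big_split.
Qed.

Lemma is_derive_Etot (lambda eps : R) (u gphi : R -> R * R -> 'rV[R]_2)
    (u' gphi' : R * R -> 'rV[R]_2) (psi : R -> R * R -> R) (psi' : R * R -> R) :
  (forall c, sep_deriv Om t (fun s x => u s x 0 c) (fun x => u' x 0 c)) ->
  (forall c, sep_deriv Om t (fun s x => gphi s x 0 c) (fun x => gphi' x 0 c)) ->
  sep_deriv Om t psi psi' ->
  is_derive t 1 (fun s => Etot Om lambda eps (u s) (gphi s) (psi s))
    (integ Om (fun x => vdot (u' x) (u t x))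
     + lambda * (integ Om (fun x => psi' x * psi t x)
                 + (eps ^+ 2)^-1 * integ Om (fun x => vdot (fpot (gphi t x)) (gphi' x)))).
Proof.
move=> du dgphi dpsi.
have dU : sep_deriv Om t (fun s x => 2^-1 * vdot (u s x) (u s x)) (fun x => vdot (u' x) (u t x)).
  apply: sep_deriv_ext (sep_derivM (sep_deriv_cst t (bdd_meas_cst Om 2^-1))
                                   (sep_deriv_vdot du du)) _ _ => // x.
  by rewrite (vdotC (u t x)); field.
have dP : sep_deriv Om t (fun s x => 2^-1 * psi s x ^+ 2) (fun x => psi' x * psi t x).
  apply: sep_deriv_ext (sep_derivM (sep_deriv_cst t (bdd_meas_cst Om 2^-1))
                                   (sep_derivM dpsi dpsi)) _ _ => [s x|x].
    by rewrite expr2.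
  by field.
have dQ := sep_derivD (sep_deriv_vdot dgphi dgphi) (sep_deriv_cst t (bdd_meas_cst Om (-1))).
have dF : sep_deriv Om t (fun s x => Fpot (gphi s x))
                         (fun x => vdot (fpot (gphi t x)) (gphi' x)).
  apply: sep_deriv_ext (sep_derivM (sep_deriv_cst t (bdd_meas_cst Om 4^-1))
                                   (sep_derivM dQ dQ)) _ _ => [s x|x].
    by rewrite /Fpot expr2.
  by rewrite /fpot vdotZl (vdotC (gphi' x)); field.
have bU s := (bdd_meas_sep_deriv (sep_deriv_vdot du du)).1 s.
have bP s := bdd_meas_sqr ((bdd_meas_sep_deriv dpsi).1 s).
pose IU s := integ Om (fun x => 2^-1 * vdot (u s x) (u s x)).
pose IP s := integ Om (fun x => 2^-1 * psi s x ^+ 2).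
pose IF s := integ Om (fun x => Fpot (gphi s x)).
have EtotE s : Etot Om lambda eps (u s) (gphi s) (psi s) =
    IU s + lambda * (IP s + (eps ^+ 2)^-1 * IF s).
  by rewrite /Etot /IU /IP (integZl mOm finOm _ (bU s)) (integZl mOm finOm _ (bP s)).
have -> : (fun s => Etot Om lambda eps (u s) (gphi s) (psi s)) =
    (IU + lambda \*: (IP + (eps ^+ 2)^-1 \*: IF))%R.
  by apply/funext => s; exact: EtotE.
exact: is_deriveD (is_derive_integ_sep mOm finOm dU)
  (is_deriveZ lambda (is_deriveD (is_derive_integ_sep mOm finOm dP)
    (is_deriveZ _ (is_derive_integ_sep mOm finOm dF)))).
Qed.

Lemma integ_tderiv_eq (G : R -> R * R -> 'rV[R]_2) (G' W : R * R -> 'rV[R]_2)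
    (P : R -> R * R -> R) (P' Q : R * R -> R) :
  (forall c, sep_deriv Om t (fun s x => G s x 0 c) (fun x => G' x 0 c)) ->
  sep_deriv Om t P P' ->
  (forall c, bdd_meas Om (fun x => W x 0 c)) -> bdd_meas Om Q ->
  (\forall s \near t,
     integ Om (fun x => vdot (G s x) (W x)) = integ Om (fun x => P s x * Q x)) ->
  integ Om (fun x => vdot (G' x) (W x)) = integ Om (fun x => P' x * Q x).
Proof.
move=> dG dP bW bQ GP.
have dGW : sep_deriv Om t (fun s x => vdot (G s x) (W x)) (fun x => vdot (G' x) (W x)).
  by apply: sep_deriv_sum => c; exact: sep_derivMr.
have dPQ := sep_derivMr dP bQ.
have [bGW bGW'] := bdd_meas_sep_deriv dGW; have [bPQ bPQ'] := bdd_meas_sep_deriv dPQ.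
apply/eqP; rewrite -subr_eq0 -(integB mOm finOm bGW' bPQ'); apply/eqP.
have H0 : \forall s \near t,
    integ Om (fun x => vdot (G s x) (W x) - P s x * Q x) = 0.
  by apply: filterS GP => s GPs; rewrite (integB mOm finOm (bGW s) (bPQ s)) GPs subrr.
exact: (sep_deriv_integ_eq0 mOm finOm H0 (sep_derivD dGW (sep_derivN dPQ))).

Qed.

End EnergyIdentities.

(* The scheme tested with (u, p, phi_t), and the time derivative of the
   auxiliary equation tested with psi; [S] stands for the dissipation
   (sigma^d(D u, grad phi), D u), which the argument never looks into. *)
Lemma energy_balance (R : realType) (Om : set (R * R)) (lambda gamma eps S : R)
    (u u' gphi gphi' gpsi : R * R -> 'rV[R]_2) (J : R * R -> 'M[R]_2)
    (p phi' psi psi' : R * R -> R) :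
  measurable (Om : set (T2 R)) -> (lam2 Om < +oo)%E ->
  (forall c, bdd_meas Om (fun x => u x 0 c)) ->
  (forall c, bdd_meas Om (fun x => gphi x 0 c)) -> bdd_meas Om phi' ->
  ctri Om u J u J u = 0 ->
  integ Om (fun x => vdot (u' x) (u x)) + ctri Om u J u J u + S
    - integ Om (fun x => p x * \tr (J x))
    + lambda / gamma *
        integ Om (fun x => (phi' x + vdot (u x) (gphi x)) * vdot (gphi x) (u x)) = 0 ->
  integ Om (fun x => \tr (J x) * p x) = 0 ->
  gamma^-1 * integ Om (fun x => (phi' x + vdot (u x) (gphi x)) * phi' x)
    + integ Om (fun x => vdot (gpsi x) (gphi' x))
    + (eps ^+ 2)^-1 * integ Om (fun x => vdot (fpot (gphi x)) (gphi' x)) = 0 ->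
  integ Om (fun x => vdot (gphi' x) (gpsi x)) = integ Om (fun x => psi' x * psi x) ->
  integ Om (fun x => vdot (u' x) (u x))
    + lambda * (integ Om (fun x => psi' x * psi x)
                + (eps ^+ 2)^-1 * integ Om (fun x => vdot (fpot (gphi x)) (gphi' x)))
    + S + lambda / gamma * integ Om (fun x => (phi' x + vdot (u x) (gphi x)) ^+ 2) = 0.
Proof.
move=> mOm finOm bu bgphi bphi' conv0 momentum mass phase aux.
have bw := bdd_measD bphi' (bdd_meas_vdot bu bgphi).
rewrite [X in _ / gamma * X](@eq_integ _ _ _ (fun x => (phi' x + vdot (u x) (gphi x)) * phi' x +
                                  (phi' x + vdot (u x) (gphi x)) * vdot (gphi x) (u x)));
  last by move=> x _; rewrite (vdotC (gphi x)); ring.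
rewrite (integD mOm finOm (bdd_measM bw bphi') (bdd_measM bw (bdd_meas_vdot bgphi bu))).
rewrite conv0 (@eq_integ _ _ (fun x => p x * _) _ (fun x _ => mulrC _ _)) mass in momentum.
rewrite (@eq_integ _ _ (fun x => vdot (gpsi x) _) _ (fun x _ => vdotC _ _)) aux in phase.
set A := integ Om _ in momentum *; set Y := integ Om _ in momentum *.
set X := integ Om _ in phase *; set B := integ Om _ in phase *; set F := integ Om _ in phase *.
have -> : A + lambda * (B + (eps ^+ 2)^-1 * F) + S + lambda / gamma * (X + Y) =
    (A + 0 + S - 0 + lambda / gamma * Y) + lambda * (gamma^-1 * X + B + (eps ^+ 2)^-1 * F).
  by ring.
by rewrite momentum phase mulr0 addr0.
Qed.

Theorem mainTheorem1 (R : realType) (Om : set (R * R))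
  (mu1 mu4 mu5 lambda gamma eps : R)
  (nu np nf ns : nat)
  (bu : 'I_nu -> R * R -> 'rV[R]_2) (Ju : 'I_nu -> R * R -> 'M[R]_2)
  (bp : 'I_np -> R * R -> R)
  (bf : 'I_nf -> R * R -> R) (gf : 'I_nf -> R * R -> 'rV[R]_2)
  (bs : 'I_ns -> R * R -> R) (gs : 'I_ns -> R * R -> 'rV[R]_2)
  (t0 t1 : R)
  (au : 'I_nu -> R -> R) (ap : 'I_np -> R -> R)
  (af : 'I_nf -> R -> R) (aps : 'I_ns -> R -> R) :
  (* Om is a bounded domain of R^2 *)
  open Om -> connected Om ->
  (exists M : R, forall x, Om x -> `|x.1| <= M /\ `|x.2| <= M) ->
  0 < lambda -> 0 < gamma -> 0 < eps ->
  (* spanning families of the conforming spaces U_h, P_h, Phi_h, Psi_h *)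
  (forall k, fe_vector Om (bu k) (Ju k)) ->
  (forall k, L2 Om (bp k)) ->
  (forall k, fe_scalar Om (bf k) (gf k)) ->
  (forall k, fe_scalar Om (bs k) (gs k)) ->
  let I := [set t : R | t0 < t < t1] in
  (* the discrete solution and its time derivatives *)
  let u t := lcv (fun k => au k t) bu in
  let Jac t := lcv (fun k => au k t) Ju in
  let u_t t := lcv (fun k => derive1 (au k) t) bu in
  let p t := lcs (fun k => ap k t) bp in
  let phi_t t := lcs (fun k => derive1 (af k) t) bf in
  let gphi t := lcv (fun k => af k t) gf in
  let psi t := lcs (fun k => aps k t) bs in
  let gpsi t := lcv (fun k => aps k t) gs in
  (forall k, C1_on I (au k)) ->
  (forall k, C1_on I (af k)) ->
  (forall k, C1_on I (aps k)) ->
  (forall t, I t -> H10 Om (u t) (Jac t) /\ mean_zero Om (p t)) ->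
  (* the space-discrete scheme *)
  (forall t, I t ->
   forall (cu : 'I_nu -> R) (cp : 'I_np -> R) (cf : 'I_nf -> R) (cs : 'I_ns -> R),
   let ub := lcv cu bu in
   let Jb := lcv cu Ju in
   let pb := lcs cp bp in
   let phib := lcs cf bf in
   let gphib := lcv cf gf in
   let psib := lcs cs bs in
   let gpsib := lcv cs gs in
   H10 Om ub Jb -> mean_zero Om pb ->
   [/\ integ Om (fun x => vdot (u_t t x) (ub x))
       + ctri Om (u t) (Jac t) (u t) (Jac t) ub
       + integ Om (fun x => mdot (sigma_d mu1 mu4 mu5 (symgrad (Jac t x)) (gphi t x))
                                (symgrad (Jb x)))
       - integ Om (fun x => p t x * \tr (Jb x))
       + lambda / gamma *
           integ Om (fun x => (phi_t t x + vdot (u t x) (gphi t x)) * vdot (gphi t x) (ub x))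
       = 0,
     integ Om (fun x => \tr (Jac t x) * pb x) = 0,
     gamma^-1 * integ Om (fun x => (phi_t t x + vdot (u t x) (gphi t x)) * phib x)
       + integ Om (fun x => vdot (gpsi t x) (gphib x))
       + (eps ^+ 2)^-1 * integ Om (fun x => vdot (fpot (gphi t x)) (gphib x))
       = 0 &
     integ Om (fun x => vdot (gphi t x) (gpsib x)) - integ Om (fun x => psi t x * psib x)
       = 0]) ->
  (* energy law *)
  forall t, I t ->
  let E s := Etot Om lambda eps (u s) (gphi s) (psi s) in
  derivable E t 1 /\
  derive1 E t
  + integ Om (fun x => mdot (sigma_d mu1 mu4 mu5 (symgrad (Jac t x)) (gphi t x))
                           (symgrad (Jac t x)))
  + lambda / gamma * integ Om (fun x => (phi_t t x + vdot (u t x) (gphi t x)) ^+ 2)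
  = 0.
Proof.
move=> oOm _ Om_bdd _ _ _ fe_u _ fe_phi fe_psi I u Jac u_t p phi_t gphi psi gpsi
  C1u C1phi C1psi uH10 scheme t It E.
have mOm := open_measurable2 oOm.
have finOm := box_bounded_lam2_fin Om_bdd mOm.
have du k := (C1u k).1 t It; have dphi k := (C1phi k).1 t It.
have dpsi k := (C1psi k).1 t It.
have bu_c k c : bdd_meas Om (fun x => bu k x 0 c) by have [] := fe_vector_entries (fe_u k).
have bphi k := (fe_scalar_bdd_meas (fe_phi k)).1; have bgf k := (fe_scalar_bdd_meas (fe_phi k)).2.
have bpsi k := (fe_scalar_bdd_meas (fe_psi k)).1; have bgs k := (fe_scalar_bdd_meas (fe_psi k)).2.
have dgphi c := sep_deriv_lcv dphi (bgf^~ c).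
have dE := is_derive_Etot mOm finOm lambda eps (fun c => sep_deriv_lcv du (bu_c^~ c))
  dgphi (sep_deriv_lcs dpsi bpsi).
split; first exact: ex_derive.
rewrite derive1E derive_val.
have [momentum mass phase _] := scheme t It (au^~ t) (ap^~ t) (fun k => derive1 (af k) t)
  (aps^~ t) (uH10 t It).1 (uH10 t It).2.
have nearI : \forall s \near t, I s.
  have : t \in `]t0, t1[ by rewrite in_itv.
  by move/near_in_itvoo; apply: filterS => s; rewrite in_itv.
apply: (energy_balance mOm finOm (fun c => bdd_meas_lcv _ (bu_c^~ c))
  (fun c => bdd_meas_lcv _ (bgf^~ c)) (bdd_meas_lcs _ bphi)
  (ctri_self0 mOm finOm Om_bdd (fe_vector_lcv mOm finOm Om_bdd _ fe_u) (uH10 t It).1)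
  momentum mass phase).
(* the auxiliary equation at times near t, tested with psi t *)
apply: (integ_tderiv_eq mOm finOm dgphi (sep_deriv_lcs dpsi bpsi)
  (fun c => bdd_meas_lcv _ (bgs^~ c)) (bdd_meas_lcs _ bpsi)).
apply: filterS nearI => s Is; apply/eqP; rewrite -subr_eq0; apply/eqP.
by have [_ _ _ ->] := scheme s Is (au^~ s) (ap^~ s) (af^~ s) (aps^~ t)
  (uH10 s Is).1 (uH10 s Is).2.
Qed.
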